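(* Let $N\ge 1$ and $n\ge 1$ be integers, and let $x>1$ and $1\le y<2$ be real numbers. Let $\mathcal{S}_0,\dots,\mathcal{S}_{n-1}$ be nonempty sets of QPSK sequences of length $N$ such that, for every $0\le i\le n-1$: (a) $\mathrm{PEP}(\mathbf{s})\le x\,y^{2i}N$ for every $\mathbf{s}\in\mathcal{S}_i$; and (b) if $\mathbf{s}\in\mathcal{S}_i$ then $j^m\mathbf{s}\in\mathcal{S}_i$ for every $m\in\mathbb{Z}_4$. Let $\mathcal{A}$ be the set of all $2^{2n}$-QAM sequences associated with tuples $(\mathbf{s}_0,\dots,\mathbf{s}_{n-1})$ with $\mathbf{s}_i\in\mathcal{S}_i$ for all $i$. Then $$\mathrm{PMEPR}(\mathcal{A})<\frac{3}{4}\cdot\frac{x}{(1-\frac{y}{2})^2}.$$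
   Context: Let $j=\sqrt{-1}$. Fix $T>0$ and reals $f_0,\Delta f$ with $T\Delta f$ a positive integer; set $f_k=f_0+k\Delta f$. For a complex sequence $\mathbf{a}=(a_0,\dots,a_{N-1})$ define $S_{\mathbf{a}}(t)=\sum_{k=0}^{N-1}a_ke^{2\pi j f_k t}$, $P_{\mathbf{a}}(t)=|S_{\mathbf{a}}(t)|^2$, and $\mathrm{PEP}(\mathbf{a})=\sup_{t\in[0,T]}P_{\mathbf{a}}(t)$. A QPSK sequence of length $N$ is a sequence $\mathbf{s}=(s_0,\dots,s_{N-1})$ with every $s_k\in\{1,j,-1,-j\}$; $j^m\mathbf{s}=(j^ms_0,\dots,j^ms_{N-1})$. The $2^{2n}$-QAM sequence associated with QPSK sequences $\mathbf{s}_0,\dots,\mathbf{s}_{n-1}$, $\mathbf{s}_i=(s_{i,0},\dots,s_{i,N-1})$, is $\mathbf{a}=(a_0,\dots,a_{N-1})$ with $a_k=\frac{\sqrt2}{2}e^{\pi j/4}\sum_{i=0}^{n-1}2^{n-1-i}s_{i,k}$. The mean envelope power of $\mathcal{A}$ is $P_{av}(\mathcal{A})=\mathbb{E}\big[\frac1T\int_0^TP_{\mathbf{a}}(t)\,dt\big]=\mathbb{E}\|\mathbf{a}\|^2$, where the expectation is over $\mathbf{a}$ associated with $(\mathbf{s}_0,\dots,\mathbf{s}_{n-1})$ chosen uniformly at random from $\mathcal{S}_0\times\cdots\times\mathcal{S}_{n-1}$ (each $\mathbf{s}_i$ uniform in $\mathcal{S}_i$, independently). The peak-to-mean envelope power ratio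 is $\mathrm{PMEPR}(\mathcal{A})=\max_{\mathbf{a}\in\mathcal{A}}\mathrm{PEP}(\mathbf{a})/P_{av}(\mathcal{A})$. *)

From HB Require Import structures.
From mathcomp Require Import all_boot all_order all_algebra.
From mathcomp Require Import all_classical all_reals all_analysis.
From mathcomp Require Import complex.
Set Implicit Arguments. Unset Strict Implicit. Unset Printing Implicit Defensive.
Import Order.TTheory GRing.Theory Num.Theory.
Local Open Scope ring_scope.
Local Open Scope complex_scope.

Section OFDM.
Variable R : realType.

Definition expj (th : R) : R[i] := (cos th) +i* (sin th).

(* A QPSK symbol is encoded by its exponent m : 'I_4, standing for j^m. *)
Definition qpsk_val (m : 'I_4) : R[i] := 'i ^+ (m : nat).

Definition qpsk_seq (N : nat) := {ffun 'I_N -> 'I_4}.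

Definition qpsk_rot (N : nat) (m : 'I_4) (s : qpsk_seq N) : qpsk_seq N :=
  [ffun k => m + s k].

Definition Sig (f0 df : R) (N : nat) (a : 'I_N -> R[i]) (t : R) : R[i] :=
  \sum_(k < N) a k * expj (2 * pi * (f0 + (k : nat)%:R * df) * t).

Definition Pow (f0 df : R) (N : nat) (a : 'I_N -> R[i]) (t : R) : R :=
  Normc.normc (Sig f0 df a t) ^+ 2.

Definition PEP (T f0 df : R) (N : nat) (a : 'I_N -> R[i]) : R :=
  sup [set Pow f0 df a t | t in `[0, T]%classic].

Definition qpsk_cseq (N : nat) (s : qpsk_seq N) : 'I_N -> R[i] :=
  fun k => qpsk_val (s k).

Definition qam (n N : nat) (s : 'I_n -> qpsk_seq N) : 'I_N -> R[i] :=
  fun k => ((Num.sqrt 2 / 2)%:C * expj (pi / 4)) *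
           \sum_(i < n) (2 ^+ (n - 1 - i)%N)%:C * qpsk_val (s i k).

Definition tuples (n N : nat) (S : 'I_n -> {set qpsk_seq N}) :
  {set {ffun 'I_n -> qpsk_seq N}} :=
  [set s : {ffun 'I_n -> qpsk_seq N} | [forall i, s i \in S i]].

Definition sqnorm (N : nat) (a : 'I_N -> R[i]) : R :=
  \sum_(k < N) Normc.normc (a k) ^+ 2.

Definition Pav (n N : nat) (S : 'I_n -> {set qpsk_seq N}) : R :=
  (#|tuples S|%:R)^-1 * \sum_(s in tuples S) sqnorm (qam s).

Definition PMEPR (T f0 df : R) (n N : nat) (S : 'I_n -> {set qpsk_seq N}) : R :=
  (\big[Num.max/0]_(s in tuples S) PEP T f0 df (qam s)) / Pav S.

End OFDM.

From HB Require Import structures.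
From mathcomp Require Import all_boot all_order all_algebra.
From mathcomp Require Import all_classical all_reals all_analysis.
From mathcomp Require Import complex ring lra.
Set Implicit Arguments. Unset Strict Implicit. Unset Printing Implicit Defensive.
Import Order.TTheory GRing.Theory Num.Theory.
Local Open Scope ring_scope.
Local Open Scope complex_scope.

(* Rotation invariance of each S_i makes the set of tuples invariant under
   negating one component, so every cross term E[s_{i,k} s_{l,k}^*] with
   i <> l vanishes and P_av = (N/2) sum_i 4^(n-1-i).  The peak is bounded by the
   triangle inequality:
     |S_a(t)| <= (sqrt 2/2) sum_i 2^(n-1-i) |S_{s_i}(t)|
              <= (sqrt 2/2) sqrt (x N) sum_i 2^(n-1-i) y^i.
   Both sums are geometric, (2 - y) sum_i 2^(n-1-i) y^i = 2^n - y^n and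
   3 sum_i 4^(n-1-i) = 4^n - 1, and (2^n - y^n)^2 < 4^n - 1 for 1 <= y <= 2. *)

Section ComplexNorm.
Variable R : rcfType.
Local Notation normc := (@Normc.normc R).
Implicit Types z : R[i].

Lemma normC_normc z : `|z| = (normc z)%:C.
Proof. by case: z. Qed.

Lemma normc_ge0 z : 0 <= normc z.
Proof. by case: z => a b; apply: sqrtr_ge0. Qed.

Lemma normc_real (r : R) : 0 <= r -> normc r%:C = r.
Proof. by move=> r_ge0 /=; rewrite expr0n addr0 sqrtr_sqr ger0_norm. Qed.

Lemma normc_i : normc 'i = 1.
Proof. by rewrite /= expr0n add0r expr1n sqrtr1. Qed.

Lemma sqr_normc z : (normc z ^+ 2)%:C = z * z^*.
Proof. by rewrite rmorphXn /= -normC_normc normCK. Qed.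

Lemma normc_sum (I : finType) (P : pred I) (F : I -> R[i]) :
  normc (\sum_(i | P i) F i) <= \sum_(i | P i) normc (F i).
Proof. exact: (@ler_norm_sum _ (Rcomplex R)). Qed.

Lemma conj_realC (r : R) : Num.conj r%:C = r%:C.
Proof. exact: conjc_real. Qed.

Lemma mul_sum_conj (I : finType) (w : I -> R) (u : I -> R[i]) :
  (\sum_i (w i)%:C * u i) * (\sum_i (w i)%:C * u i)^* =
  \sum_i \sum_l (w i * w l)%:C * (u i * (u l)^*).
Proof.
rewrite rmorph_sum mulr_suml; apply: eq_bigr => i _.
rewrite mulr_sumr; apply: eq_bigr => l _.
by rewrite !rmorphM /= conj_realC; ring.
Qed.

End ComplexNorm.

Definition negate_at (n N : nat) (i0 : 'I_n) (s : {ffun 'I_n -> qpsk_seq N}) :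
  {ffun 'I_n -> qpsk_seq N} :=
  [ffun i => if i == i0 then qpsk_rot 2%R (s i) else s i].

Lemma negate_atK (n N : nat) (i0 : 'I_n) : involutive (@negate_at n N i0).
Proof.
move=> s; apply/ffunP => i; rewrite !ffunE.
case: eqP => // _; apply/ffunP => k; rewrite !ffunE addrA.
by rewrite (_ : 2 + 2 = 0 :> 'I_4) ?add0r //; apply: val_inj.
Qed.

Lemma card_tuples_gt0 (n N : nat) (S : 'I_n -> {set qpsk_seq N}) :
  (forall i, exists s, s \in S i) -> (0 < #|tuples S|)%N.
Proof.
move=> S_neq0; apply/card_gt0P.
exists [ffun i => odflt [ffun _ => ord0] [pick s in S i]].
rewrite inE; apply/forallP => i; rewrite ffunE.
case: pickP => [//|no_s]; have [s s_S] := S_neq0 i.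
by move: (no_s s); rewrite s_S.
Qed.

Section QPSK.
Variable R : realType.
Local Notation normc := (@Normc.normc R).
Local Notation qam_scale := ((Num.sqrt 2 / 2)%:C * expj (pi / 4) : R[i]).

Lemma normc_expj (th : R) : normc (expj th) = 1.
Proof. by rewrite /= cos2Dsin2 sqrtr1. Qed.

Lemma normc_qam_scale : normc qam_scale = Num.sqrt 2 / 2.
Proof.
by rewrite Normc.normcM normc_expj mulr1 normc_real // divr_ge0 ?sqrtr_ge0.
Qed.

Lemma qpsk_valD (a b : 'I_4) : qpsk_val R (a + b) = qpsk_val R a * qpsk_val R b.
Proof.
have i4 : 'i ^+ 4 = 1 :> R[i] by rewrite (exprM _ 2 2) sqr_i sqrrN expr1n.
rewrite /qpsk_val -exprD /= {2}(divn_eq (a + b) 4) exprD mulnC exprM i4.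
by rewrite expr1n mul1r.
Qed.

Lemma qpsk_val2 : qpsk_val R 2%R = -1.
Proof. exact: sqr_i. Qed.

Lemma normc_qpsk_val (m : 'I_4) : normc (qpsk_val R m) = 1.
Proof.
rewrite /qpsk_val; elim: (m : nat) => [|k IHk]; first exact: Normc.normc1.
by rewrite exprS Normc.normcM normc_i IHk mulr1.
Qed.

Lemma qpsk_val_conj (m : 'I_4) : qpsk_val R m * (qpsk_val R m)^* = 1.
Proof. by rewrite -sqr_normc normc_qpsk_val expr1n. Qed.

Section RotationInvariant.
Variables (n N : nat) (S : 'I_n -> {set qpsk_seq N}).
Hypothesis S_rot : forall (i : 'I_n) (s : qpsk_seq N) (m : 'I_4),
  s \in S i -> qpsk_rot m s \in S i.

Lemma negate_at_tuples (i0 : 'I_n) (s : {ffun 'I_n -> qpsk_seq N}) :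
  (negate_at i0 s \in tuples S) = (s \in tuples S).
Proof.
suff negate_in : forall t, t \in tuples S -> negate_at i0 t \in tuples S.
  by apply/idP/idP => [/negate_in|/negate_in//]; rewrite negate_atK.
move=> t; rewrite !inE => /forallP t_S; apply/forallP => i; rewrite ffunE.
by case: eqP => _; [apply: S_rot|]; apply: t_S.
Qed.

(* Negating the [i]-th component is a bijection of [tuples S] that flips the
   sign of every cross term [s_i s_l^*] with [l != i]. *)
Lemma sum_tuples_qpsk_cross (i l : 'I_n) (k : 'I_N) : i != l ->
  \sum_(s in tuples S) qpsk_val R (s i k) * (qpsk_val R (s l k))^* = 0.
Proof.
move=> il; set X := (X in X = 0).
have X_opp : X = - X.
  rewrite {1}/X (reindex_inj (can_inj (negate_atK i))) /=.
  rewrite (eq_bigl (mem (tuples S))) => [|s]; last exact: negate_at_tuples.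
  rewrite -sumrN; apply: eq_bigr => s _.
  rewrite !ffunE eqxx eq_sym (negbTE il) ffunE qpsk_valD qpsk_val2.
  by rewrite mulN1r mulNr.
by move/eqP: X_opp; rewrite -subr_eq0 opprK -mulr2n mulrn_eq0 => /eqP.
Qed.

Lemma sum_tuples_sqr_normc (w : 'I_n -> R) (k : 'I_N) :
  \sum_(s in tuples S) normc (\sum_i (w i)%:C * qpsk_val R (s i k)) ^+ 2 =
  #|tuples S|%:R * \sum_i w i ^+ 2.
Proof.
apply: complexI; rewrite !rmorph_sum rmorphM rmorph_nat /= rmorph_sum mulr_sumr.
under eq_bigr => s _ do rewrite sqr_normc mul_sum_conj.
rewrite exchange_big; apply: eq_bigr => i _ /=.
rewrite exchange_big (bigD1 i) //= [X in _ + X]big1 => [|l li]; last first.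
  by rewrite -mulr_sumr sum_tuples_qpsk_cross ?mulr0 // eq_sym.
under eq_bigr => s _ do rewrite qpsk_val_conj mulr1.
by rewrite sumr_const addr0 mulr_natl expr2.
Qed.

Lemma Pav_qam : (0 < #|tuples S|)%N ->
  Pav R S = N%:R / 2 * \sum_(i < n) (2 ^+ (n - 1 - i)) ^+ 2.
Proof.
move=> card_gt0; have card_neq0 : #|tuples S|%:R != 0 :> R.
  by rewrite pnatr_eq0 -lt0n.
have scale2 : normc qam_scale ^+ 2 = 1 / 2.
  by rewrite normc_qam_scale expr_div_n sqr_sqrtr //; field.
rewrite /Pav /sqnorm exchange_big /=.
under eq_bigr => k _.
  under eq_bigr => s _ do rewrite /qam Normc.normcM exprMn scale2.
  rewrite -mulr_sumr sum_tuples_sqr_normc; over.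
by rewrite sumr_const card_ord -mulr_natl; field.
Qed.

End RotationInvariant.

Section PeakPower.
Variables (T f0 df : R).

Lemma normc_Sig_le (N : nat) (a : 'I_N -> R[i]) (t : R) :
  normc (Sig f0 df a t) <= \sum_k normc (a k).
Proof.
rewrite /Sig; apply: le_trans (normc_sum _ _) _; apply: ler_sum => k _.
by rewrite Normc.normcM normc_expj mulr1.
Qed.

Lemma Pow_qpsk_le (N : nat) (s : qpsk_seq N) (t : R) :
  Pow f0 df (qpsk_cseq R s) t <= N%:R ^+ 2.
Proof.
rewrite /Pow; apply: lerXn2r; rewrite ?nnegrE ?normc_ge0 //.
apply: le_trans (normc_Sig_le _ _) _.
by under eq_bigr => k _ do rewrite normc_qpsk_val; rewrite sumr_const card_ord.
Qed.

Lemma Pow_le_PEP_qpsk (N : nat) (s : qpsk_seq N) (t : R) : 0 <= t <= T ->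
  Pow f0 df (qpsk_cseq R s) t <= PEP T f0 df (qpsk_cseq R s).
Proof.
move=> t_in; apply: ub_le_sup; last by exists t; rewrite //= in_itv.
by exists (N%:R ^+ 2) => _ [t' _ <-]; apply: Pow_qpsk_le.
Qed.

Lemma normc_Sig_le_sqrt_PEP (N : nat) (s : qpsk_seq N) (t : R) : 0 <= t <= T ->
  normc (Sig f0 df (qpsk_cseq R s) t) <= Num.sqrt (PEP T f0 df (qpsk_cseq R s)).
Proof.
move=> t_in; have Pow_le := Pow_le_PEP_qpsk s t_in.
rewrite -(ger0_norm (normc_ge0 _)) -sqrtr_sqr ler_sqrt //.
by apply: le_trans Pow_le; rewrite /Pow sqr_ge0.
Qed.

Lemma Sig_qam (n N : nat) (s : 'I_n -> qpsk_seq N) (t : R) :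
  Sig f0 df (qam R s) t =
  qam_scale *
  \sum_(i < n) (2 ^+ (n - 1 - i))%:C * Sig f0 df (qpsk_cseq R (s i)) t.
Proof.
rewrite /Sig /qam.
under eq_bigr => k _ do rewrite -[_ * _ * expj _]mulrA mulr_suml.
rewrite -mulr_sumr exchange_big /=; congr (_ * _); apply: eq_bigr => i _.
by rewrite mulr_sumr; apply: eq_bigr => k _; rewrite mulrA.
Qed.

Lemma PEP_qam_le (n N : nat) (s : 'I_n -> qpsk_seq N) : 0 <= T ->
  PEP T f0 df (qam R s) <=
  (\sum_(i < n) 2 ^+ (n - 1 - i) * Num.sqrt (PEP T f0 df (qpsk_cseq R (s i))))
    ^+ 2 / 2.
Proof.
move=> T_ge0; set B := \sum_(i < n) _.
have B_ge0 : 0 <= B by apply: sumr_ge0 => i _; rewrite mulr_ge0 ?sqrtr_ge0.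
apply: ge_sup => [|_ [t /= t_in <-]].
  by exists (Pow f0 df (qam R s) 0), 0; rewrite //= in_itv /= lexx.
have -> : B ^+ 2 / 2 = (Num.sqrt 2 / 2 * B) ^+ 2.
  by rewrite exprMn expr_div_n sqr_sqrtr // expr2; field.
apply: lerXn2r; rewrite ?nnegrE ?normc_ge0 ?mulr_ge0 ?divr_ge0 ?sqrtr_ge0 //.
rewrite Sig_qam Normc.normcM normc_qam_scale ler_wpM2l ?divr_ge0 ?sqrtr_ge0 //.
apply: le_trans (normc_sum _ _) _; apply: ler_sum => i _.
rewrite Normc.normcM normc_real ?exprn_ge0 // ler_wpM2l ?exprn_ge0 //.
by apply: normc_Sig_le_sqrt_PEP; move: t_in; rewrite in_itv.
Qed.

Lemma PEP_qam_le_geometric (n N : nat) (s : 'I_n -> qpsk_seq N) (c y : R) :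
  0 <= T -> 0 <= c -> 0 <= y ->
  (forall i : 'I_n, PEP T f0 df (qpsk_cseq R (s i)) <= c * y ^+ (2 * i)) ->
  PEP T f0 df (qam R s) <=
  c * (\sum_(i < n) 2 ^+ (n - 1 - i) * y ^+ i) ^+ 2 / 2.
Proof.
move=> T_ge0 c_ge0 y_ge0 PEP_s; apply: le_trans (PEP_qam_le s T_ge0) _.
apply: ler_wpM2r => //; rewrite -[c](sqr_sqrtr c_ge0) -exprMn mulr_sumr.
apply: lerXn2r; rewrite ?nnegrE; try apply: sumr_ge0 => i _.
- by rewrite mulr_ge0 ?sqrtr_ge0.
- by rewrite !mulr_ge0 ?sqrtr_ge0 ?exprn_ge0.
apply: ler_sum => i _; rewrite mulrCA ler_pM2l ?exprn_gt0 //.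
rewrite -(ger0_norm (exprn_ge0 i y_ge0)) -sqrtr_sqr -sqrtrM // -exprM mulnC.
by rewrite ler_sqrt ?mulr_ge0 ?exprn_ge0.
Qed.

End PeakPower.

Lemma sqr_sum_geometric_lt (n : nat) (y : R) : (0 < n)%N -> 1 <= y <= 2 ->
  (2 - y) ^+ 2 * (\sum_(i < n) 2 ^+ (n - 1 - i) * y ^+ i) ^+ 2 <
  3 * \sum_(i < n) (2 ^+ (n - 1 - i)) ^+ 2.
Proof.
move=> n_gt0 /andP[y_ge1 y_le2].
have sumG : (2 - y) * \sum_(i < n) 2 ^+ (n - 1 - i) * y ^+ i = 2 ^+ n - y ^+ n.
  by rewrite subrXX subn1.
have sumH : 3 * \sum_(i < n) (2 ^+ (n - 1 - i)) ^+ 2 = (2 ^+ n) ^+ 2 - 1 :> R.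
  have -> : (2 ^+ n) ^+ 2 - 1 = (2 ^+ 2) ^+ n - 1 ^+ n :> R.
    by rewrite exprAC expr1n.
  rewrite subrXX subn1; congr (_ * _); first by rewrite expr2; ring.
  by apply: eq_bigr => i _; rewrite expr1n mulr1 exprAC.
rewrite -exprMn sumG sumH.
have two_le : 2 <= 2 ^+ n :> R.
  by rewrite -[X in X <= _]expr1; apply: ler_weXn2l => //; lra.
have y_le : 1 <= y ^+ n by apply: exprn_ege1.
have yn_le : y ^+ n <= 2 ^+ n by apply: lerXn2r; rewrite ?nnegrE //; lra.
nra.
Qed.

End QPSK.

Theorem corollary1 (R : realType) (T f0 df : R) (N n : nat) (x y : R)
  (S : 'I_n -> {set qpsk_seq N}) :
  0 < T -> (exists m : nat, (0 < m)%N /\ T * df = m%:R) ->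
  (1 <= N)%N -> (1 <= n)%N -> 1 < x -> 1 <= y -> y < 2 ->
  (forall i, exists s, s \in S i) ->
  (forall (i : 'I_n) (s : qpsk_seq N), s \in S i ->
      PEP T f0 df (qpsk_cseq R s) <= x * y ^+ (2 * i) * N%:R) ->
  (forall (i : 'I_n) (s : qpsk_seq N) (m : 'I_4), s \in S i ->
      qpsk_rot m s \in S i) ->
  PMEPR T f0 df S < 3 / 4 * (x / (1 - y / 2) ^+ 2).
Proof.
move=> T_gt0 _ N_gt0 n_gt0 x_gt1 y_ge1 y_lt2 S_neq0 PEP_S S_rot.
set G := \sum_(i < n) 2 ^+ (n - 1 - i) * y ^+ i.
set H := \sum_(i < n) (2 ^+ (n - 1 - i)) ^+ 2 : R.
have GH : (2 - y) ^+ 2 * G ^+ 2 < 3 * H.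
  by apply: sqr_sum_geometric_lt => //; rewrite y_ge1 ltW.
have N_pos : 0 < N%:R :> R by rewrite ltr0n.
have H_pos : 0 < H.
  by have := mulr_ge0 (sqr_ge0 (2 - y)) (sqr_ge0 G); lra.
have max_le : \big[Num.max/0]_(s in tuples S) PEP T f0 df (qam R s) <=
              x * N%:R * G ^+ 2 / 2.
  apply: bigmax_le => [|s /[!inE] /forallP s_S].
    by rewrite divr_ge0 // mulr_ge0 ?sqr_ge0 // mulr_ge0 //; lra.
  apply: PEP_qam_le_geometric => [||| i]; [exact: ltW | | lra | ].
  - by rewrite mulr_ge0 //; lra.
  - by rewrite mulrAC; apply: PEP_S.
rewrite /PMEPR (Pav_qam R S_rot (card_tuples_gt0 S_neq0)).
apply: le_lt_trans (ler_wpM2r _ max_le) _.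
  by apply/ltW; rewrite invr_gt0 !mulr_gt0 // invr_gt0.
rewrite -(@ltr_pM2r _ ((2 - y) ^+ 2 * H)) ?mulr_gt0 ?exprn_gt0 ?subr_gt0 //.
have -> : x * N%:R * G ^+ 2 / 2 / (N%:R / 2 * H) * ((2 - y) ^+ 2 * H) =
          x * ((2 - y) ^+ 2 * G ^+ 2).
  by field; rewrite !gt_eqF.
have -> : 3 / 4 * (x / (1 - y / 2) ^+ 2) * ((2 - y) ^+ 2 * H) = x * (3 * H).
  by field; apply/eqP; lra.
by rewrite ltr_pM2l //; lra.
Qed.
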